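(* Let $\epsilon > 0$ be a sufficiently small universal constant. For every $G \in \mathcal{G}_{2n}$, the number of graphs in $\mathcal{G}_{2n}$ that are $(1\pm3\epsilon)$-cut sparsifiers of $G$ is at most $2^{n^2/4}$.
   Context: Fix disjoint vertex sets $L,R$ with $|L|=|R|=n$ and a fixed perfect matching $M$ of directed edges from $L$ to $R$. $\mathcal{G}_{2n}$ is the set of all unweighted directed graphs on vertex set $V=L\cup R$ whose set of edges from $L$ to $R$ is exactly $M$, whose edges from $R$ to $L$ form an arbitrary subset of $R\times L$, and which have no other edges. For directed graphs $G,H$ on the same vertex set $V$, $H$ is a $(1\pm\delta)$-cut sparsifier of $G$ if for all $S\subseteq V$, $(1-\delta)w_G(S,V\setminus S)\le w_H(S,V\setminus S)\le(1+\delta)w_G(S,V\setminus S)$, where $w_G(S,T)$ is the total weight (here, number) of edges of $G$ from $S$ to $T$. *)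

From HB Require Import structures.
From mathcomp Require Import all_boot all_order all_algebra.
Set Implicit Arguments. Unset Strict Implicit. Unset Printing Implicit Defensive.
Import Order.TTheory GRing.Theory Num.Theory.

(* Vertex set V = L ∪ R with L = inl 'I_n, R = inr 'I_n (disjoint, |L|=|R|=n).
   The fixed perfect matching M sends inl i to inr i. *)
Definition vert (n : nat) : finType := ('I_n + 'I_n)%type.

Definition dgraph (n : nat) := {set (vert n * vert n)}.

Definition matching_edge (n : nat) (e : vert n * vert n) : bool :=
  match e with (inl i, inr j) => i == j | _ => false end.

Definition RL_edge (n : nat) (e : vert n * vert n) : bool :=
  match e with (inr _, inl _) => true | _ => false end.

Definition G2n (n : nat) : {set dgraph n} :=
  [set D : dgraph n |
     [forall e : vert n * vert n, (e \in D) ==> (matching_edge e || RL_edge e)]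
     && [forall i : 'I_n, (inl i, inr i) \in D]].

Definition wcut (n : nat) (G : dgraph n) (S T : {set vert n}) : nat :=
  #|[set e in G | (e.1 \in S) && (e.2 \in T)]|.

Definition cut_sparsifier (R : realFieldType) (n : nat) (delta : R)
    (G H : dgraph n) : bool :=
  [forall S : {set vert n},
     ((1 - delta) * (wcut G S (~: S))%:R <= (wcut H S (~: S))%:R)%R
     && ((wcut H S (~: S))%:R <= (1 + delta) * (wcut G S (~: S))%:R)%R].

(* Two graphs of G_{2n} differ only in their R -> L edges.  For r_j in R and
   X a set of L-vertices, the cut S = (L \ X) + {r_j} is crossed exactly by the
   matching edges l_i -> r_i with i outside X + {j} and by the edges r_j -> l_i
   with i in X.  Taking for X the l_i joined to r_j in H but not in G (or
   conversely), the two cut values are m + |X| and m with m + |X| <= n, so a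
   (1 +- d)-sparsifier H of G has |X| <= d n.  Hence H differs from G on at most
   2 d n^2 <= n^2/32 of the N = n^2 possible R -> L edges when d = 3 eps <= 1/64,
   and since G is fixed H is determined by that set of differences.  There are
   at most sum_{k <= N/32} C(N, k) <= 17^N / 16^(N - N/32) <= 2^(N/4) such sets. *)

From HB Require Import structures.
From mathcomp Require Import all_boot all_order all_algebra.
From mathcomp Require Import zify lra.
Import Order.TTheory GRing.Theory Num.Theory.

Set Implicit Arguments. Unset Strict Implicit. Unset Printing Implicit Defensive.


Section G2nCuts.
Variable n : nat.

Definition edgeM (i : 'I_n) : vert n * vert n := (inl i, inr i).
Definition edgeRL (j i : 'I_n) : vert n * vert n := (inr j, inl i).

Lemma edgeM_inj : injective edgeM. Proof. by move=> a b []. Qed.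
Lemma edgeRL_inj j : injective (edgeRL j). Proof. by move=> a b []. Qed.

Lemma G2nP (K : dgraph n) : K \in G2n n ->
  (forall e, e \in K -> matching_edge e || RL_edge e) /\ (forall i, edgeM i \in K).
Proof.
by rewrite inE => /andP[/forallP KE /forallP KM]; split=> [e|]; [apply/implyP/KE|].
Qed.

Definition row_cut (j : 'I_n) (X : {set 'I_n}) : {set vert n} :=
  [set v | match v with inl i => i \notin X | inr j' => j' == j end].

Lemma row_cut_edges (K : dgraph n) j X : K \in G2n n ->
  [set e in K | (e.1 \in row_cut j X) && (e.2 \in ~: row_cut j X)] =
  edgeM @: [set i | (i \notin X) && (i != j)]
    :|: edgeRL j @: [set i in X | edgeRL j i \in K].
Proof.
move=> /G2nP[KE KM]; apply/setP => e; rewrite !inE; apply/andP/orP.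
- case=> eK; move: (KE e eK); case: e eK => -[a|a] [b|b] //= eK.
  + rewrite orbF => /eqP <- /andP[aX aj].
    by left; apply/imsetP; exists a => //; rewrite inE aX.
  + move=> _ /andP[/eqP aj]; rewrite negbK => bX; subst a.
    by right; apply/imsetP; exists b => //; rewrite inE bX.
- by case=> /imsetP[i]; rewrite inE => /andP[iX ij] ->; rewrite /= iX ij ?KM ?eqxx.
Qed.

Lemma wcut_row_cut (K : dgraph n) j X : K \in G2n n ->
  wcut K (row_cut j X) (~: row_cut j X) =
  #|[set i | (i \notin X) && (i != j)]| + #|[set i in X | edgeRL j i \in K]|.
Proof.
move=> KG; rewrite /wcut row_cut_edges //.
have disj : [disjoint edgeM @: [set i | (i \notin X) && (i != j)]
                  & edgeRL j @: [set i in X | edgeRL j i \in K]].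
  by rewrite -setI_eq0; apply/eqP/setP => e; rewrite !inE;
     apply/andP => -[/imsetP[i _ ->] /imsetP[k _]].
by rewrite cardsU (disjoint_setI0 disj) cards0 subn0
  (card_imset _ edgeM_inj) (card_imset _ (@edgeRL_inj j)).
Qed.

Lemma row_cut_size (j : 'I_n) (X : {set 'I_n}) :
  #|[set i | (i \notin X) && (i != j)]| + #|X| <= n.
Proof.
rewrite -[n in _ <= n]card_ord -(cardsC X) addnC leq_add2l.
by apply/subset_leq_card/subsetP => i; rewrite !inE => /andP[].
Qed.

Definition row_diff (K1 K2 : dgraph n) (j : 'I_n) : {set 'I_n} :=
  [set i | (edgeRL j i \in K1) && (edgeRL j i \notin K2)].

Lemma row_diff_in (K1 K2 : dgraph n) j :
  [set i in row_diff K1 K2 j | edgeRL j i \in K1] = row_diff K1 K2 j.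
Proof. by apply/setP => i; rewrite !inE andbAC andbb. Qed.

Lemma row_diff_out (K1 K2 : dgraph n) j :
  [set i in row_diff K1 K2 j | edgeRL j i \in K2] = set0.
Proof. by apply/setP => i; rewrite !inE -andbA andNb andbF. Qed.

Lemma wcut_row_diff (K1 K2 : dgraph n) j : K1 \in G2n n -> K2 \in G2n n ->
  let C := row_cut j (row_diff K1 K2 j) in
  exists2 m, m + #|row_diff K1 K2 j| <= n &
    wcut K1 C (~: C) = m + #|row_diff K1 K2 j| /\ wcut K2 C (~: C) = m.
Proof.
move=> K1G K2G C; exists #|[set i | (i \notin row_diff K1 K2 j) && (i != j)]|.
  exact: row_cut_size.
by rewrite !wcut_row_cut // row_diff_in row_diff_out cards0 addn0.
Qed.

Lemma G2n_subset (K1 K2 : dgraph n) : K1 \in G2n n -> K2 \in G2n n ->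
  (forall j i, edgeRL j i \in K1 -> edgeRL j i \in K2) -> K1 \subset K2.
Proof.
move=> /G2nP[E1 _] /G2nP[_ M2] RL; apply/subsetP => -[[a|a] [b|b]] e1;
  move: (E1 _ e1) => //=.
- by rewrite orbF => /eqP <-; apply: M2.
- by move=> _; apply: RL.
Qed.

Definition rl_diff (G H : dgraph n) : {set 'I_n * 'I_n} :=
  [set p | (edgeRL p.1 p.2 \in G) != (edgeRL p.1 p.2 \in H)].

Lemma rl_diff_inj (G : dgraph n) : {in G2n n &, injective (rl_diff G)}.
Proof.
move=> H1 H2 H1G H2G /setP eqD.
have sameRL j i : (edgeRL j i \in H1) = (edgeRL j i \in H2).
  by move: (eqD (j, i)); rewrite !inE /=; do 3 case: (_ \in _).
by apply/eqP; rewrite eqEsubset !G2n_subset // => j i; rewrite sameRL.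
Qed.

End G2nCuts.

Lemma card_set_pairs (I J : finType) (D : {set I * J}) :
  #|D| = \sum_(i : I) #|[set j | (i, j) \in D]|.
Proof.
rewrite -sum1_card big_mkcond /=.
under [RHS]eq_bigr => i _ do rewrite -sum1_card big_mkcond /=.
by rewrite pair_bigA; apply: eq_bigr => -[i j] _; rewrite inE.
Qed.

Section SparsifierRows.
Local Open Scope ring_scope.
Variables (R : realFieldType) (d : R) (n : nat) (G H : dgraph n).
Hypotheses (GG : G \in G2n n) (HG : H \in G2n n) (d_ge0 : 0 <= d)
  (GH : cut_sparsifier d G H).

Lemma card_row_diff_added j : #|row_diff H G j|%:R <= d * n%:R :> R.
Proof.
have [m + [wH wG]] := wcut_row_diff j HG GG.
rewrite -(ler_nat R) !natrD -subr_ge0 => size_le.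
have /forallP/(_ (row_cut j (row_diff H G j)))/andP[_] := GH.
rewrite wH wG natrD.
have := mulr_ge0 d_ge0 (ler0n R #|row_diff H G j|).
have := mulr_ge0 d_ge0 size_le.
lra.
Qed.

Lemma card_row_diff_removed j : #|row_diff G H j|%:R <= d * n%:R :> R.
Proof.
have [m + [wG wH]] := wcut_row_diff j GG HG.
rewrite -(ler_nat R) !natrD -subr_ge0 => size_le.
have /forallP/(_ (row_cut j (row_diff G H j)))/andP[+ _] := GH.
rewrite wH wG natrD.
have := mulr_ge0 d_ge0 size_le.
lra.
Qed.

Lemma card_rl_diff : #|rl_diff G H|%:R <= 2 * d * (n * n)%N%:R :> R.
Proof.
apply: (@le_trans _ _ (\sum_(j < n) 2 * d * n%:R)); last first.
  by rewrite sumr_const card_ord natrM mulrA [leRHS]mulr_natr.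
rewrite card_set_pairs natr_sum; apply: ler_sum => j _.
have row_sub : [set i | (j, i) \in rl_diff G H] \subset row_diff H G j :|: row_diff G H j.
  by apply/subsetP => i; rewrite !inE /=; do 2 case: (_ \in _).
have := leq_trans (subset_leq_card row_sub) (leq_card_setU _ _).1.
rewrite -(ler_nat R) natrD.
have := card_row_diff_added j; have := card_row_diff_removed j.
lra.
Qed.

End SparsifierRows.

Lemma card_sets_le (U : finType) T :
  #|[set D : {set U} | #|D| <= T]| = \sum_(k < T.+1) 'C(#|U|, k).
Proof.
elim: T => [|T IH].
  rewrite big_ord_recr big_ord0 /= bin0 -(cards1 (@set0 U)).
  by apply: eq_card => D; rewrite !inE leqn0 cards_eq0.
rewrite big_ord_recr /= -IH -card_draws -cardsUI.
have -> : [set D : {set U} | #|D| <= T] :&: [set D : {set U} | #|D| == T.+1] = set0.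
  by apply/setP => D; rewrite !inE andbC; case: eqP => [->|]; rewrite ?ltnn.
by rewrite cards0 addn0; apply: eq_card => D; rewrite !inE leq_eqVlt ltnS orbC.
Qed.

Lemma sum_binomial_le N T m : T <= N -> 0 < m ->
  (\sum_(k < T.+1) 'C(N, k)) * m ^ (N - T) <= m.+1 ^ N.
Proof.
move=> TN m_gt0; rewrite -[m.+1]addn1 expnDn big_distrl /=.
rewrite (big_ord_widen N.+1 (fun k => 'C(N, k) * m ^ (N - T))) ?ltnS //.
rewrite [leqRHS](bigID (fun i : 'I_N.+1 => i < T.+1)) /=.
apply: leq_trans (leq_addr _ _); apply: leq_sum => i; rewrite ltnS => iT.
by rewrite exp1n muln1 leq_mul2l leq_pexp2l ?orbT //; apply: leq_sub2l.
Qed.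

Lemma card_small_sets (U : finType) T : 32 * T <= #|U| ->
  #|[set D : {set U} | #|D| <= T]| ^ 4 <= 2 ^ #|U|.
Proof.
set s := #|_|; set N := #|U| => TN.
have sN : s * 16 ^ (N - T) <= 17 ^ N.
  by rewrite /s card_sets_le sum_binomial_le //; lia.
(* Raise to the 8th power: 16^(8(N - T)) >= 2^(31 N) and 17^8 <= 2^33. *)
rewrite -(leq_exp2r _ _ (isT : 0 < 2)) -(leq_pmul2r (expn_gt0 2 (31 * N))).
apply: leq_trans (_ : (s * 16 ^ (N - T)) ^ 8 <= _).
  have pow16 k : 16 ^ k = 2 ^ (4 * k) by rewrite expnM.
  by rewrite expnMn -expnM pow16 -expnM leq_mul // leq_pexp2l //; lia.
apply: leq_trans (_ : (17 ^ N) ^ 8 <= _); first by rewrite leq_exp2r.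
rewrite -!expnM -expnD mulnC expnM (_ : N * 2 + 31 * N = 33 * N); last lia.
rewrite expnM; have : 17 ^ 8 <= 2 ^ 33 by lia.
move: (17 ^ 8) (2 ^ 33) => a b ab.
by have [->|N_gt0] := posnP N; rewrite ?expn0 ?leq_exp2r.
Qed.

Theorem lemma6 (R : realFieldType) :
  exists eps0 : R, (0 < eps0)%R /\
  forall eps : R, (0 < eps)%R -> (eps <= eps0)%R ->
  forall (n : nat) (G : dgraph n), G \in G2n n ->
    #|[set H in G2n n | cut_sparsifier (3%:R * eps)%R G H]| ^ 4 <= 2 ^ (n ^ 2).
Proof.
exists (192%:R^-1)%R; split=> [|eps eps_gt0 eps_le n G GG]; first by rewrite invr_gt0 ltr0n.
set S := [set H in G2n n | _].
have d_ge0 : (0 <= 3%:R * eps :> R)%R by rewrite mulr_ge0 // ltW.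
have d_le : (64%:R * (3%:R * eps) <= 1 :> R)%R.
  by move: eps_le; rewrite -[X in (_ <= X)%R]div1r ler_pdivlMr ?ltr0n //; lra.
have rl_diff_small H : H \in S -> #|rl_diff G H| <= n ^ 2 %/ 32.
  move=> /setIdP[HG GH]; rewrite leq_divRL // -mulnn -(ler_nat R) natrM.
  have := card_rl_diff GG HG d_ge0 GH; have := ler0n R (n * n); nra.
have rl_diff_inj_S : {in S &, injective (rl_diff G)}.
  by move=> H1 H2 /setIdP[H1G _] /setIdP[H2G _]; apply: rl_diff_inj.
have card_pairs : #|{: 'I_n * 'I_n}| = n ^ 2 by rewrite card_prod card_ord mulnn.
have := @card_small_sets ('I_n * 'I_n)%type (n ^ 2 %/ 32).
rewrite card_pairs mulnC leq_divM => /(_ isT); apply: leq_trans.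
rewrite leq_exp2r // -(card_in_imset rl_diff_inj_S).
by apply/subset_leq_card/subsetP => _ /imsetP[H HS ->]; rewrite inE rl_diff_small.
Qed.
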